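(* In the setting of the context, let $E(t)=\tilde E e^{-\delta t}+\tilde S e^{(\beta/\gamma)\tilde R}e^{-\delta t}\int_{\varphi^{-1}(t)}^{u_0}e^{\delta\varphi(v)}dv$ for $t\ge0$. Then $E(\infty):=\lim_{t\to\infty}E(t)=0$, $E(t)>0$ on $[0,\infty)$, and $E$ attains its maximum $\max_{t\ge0}E(t)$ at some $t=T_1\in\{T: E'(T)=0\}$, where for $T>0$ \[ E'(T)=\Bigl(\frac{\delta}{\beta}+\tilde S e^{(\beta/\gamma)\tilde R}\varphi^{-1}(T)\Bigr)\psi\bigl(\varphi^{-1}(T)\bigr)-\delta\Bigl(N-\tilde S e^{(\beta/\gamma)\tilde R}\varphi^{-1}(T)+\frac{\gamma}{\beta}\log\varphi^{-1}(T)\Bigr). \]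
   Context: Let $\beta,\gamma,\delta>0$ be constants and $\tilde S,\tilde E,\tilde I,\tilde R$ real numbers with $N:=\tilde S+\tilde E+\tilde I+\tilde R>0$. Standing assumptions: (A1) $\tilde I>0$; (A2) $\tilde E>(\gamma/\delta)\tilde I$; (A3) $\tilde S>\delta\tilde E/(\beta\tilde I)$; (A4) $\tilde R\ge 0$ and $N>\tilde S e^{(\beta/\gamma)\tilde R}+\tilde R$. Let $\alpha$ be the unique solution in $(\tilde R,N)$ of $x=N-\tilde S e^{(\beta/\gamma)\tilde R}e^{-(\beta/\gamma)x}$, and assume (A5) $\tilde S<(\gamma/\beta)e^{(\beta/\gamma)(\alpha-\tilde R)}$. Put $u_0:=e^{-(\beta/\gamma)\tilde R}$, $u_\infty:=e^{-(\beta/\gamma)\alpha}$. Let $\psi$ be the unique function, continuous and positive on $(u_\infty,u_0]$ and $C^1$ on $(u_\infty,u_0)$, satisfying $\psi'(u)\psi(u)-\frac{\gamma+\delta}{u}\psi(u)=-\delta\,\frac{\beta N-\beta\tilde S e^{(\beta/\gamma)\tilde R}u+\gamma\log u}{u}$ on $(u_\infty,u_0)$ and $\psi(u_0)=\beta\tilde I$. Let $\varphi(u):=\int_u^{u_0}\frac{d\xi}{\xi\psi(\xi)}$; $\varphi$ is a strictly decreasing continuous bijection from $(u_\infty,u_0]$ onto $[0,\infty)$, $C^1$ on $(u_\infty,u_0)$, with inverse $\varphi^{-1}:[0,\infty)\to(u_\infty,u_0]$. *)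

From Stdlib Require Import Reals.
From Coquelicot Require Import Coquelicot.
Open Scope R_scope.

Definition phi_of (psi : R -> R) (u0 u : R) : R :=
  RInt (fun xi => / (xi * psi xi)) u u0.

Definition E_of (beta gamma delta St Et Rt u0 : R) (psi phiinv : R -> R)
  (t : R) : R :=
  Et * exp (- delta * t)
  + St * exp (beta / gamma * Rt) * exp (- delta * t)
    * RInt (fun v => exp (delta * phi_of psi u0 v)) (phiinv t) u0.

From Stdlib Require Import Reals Lra Classical.
From Coquelicot Require Import Coquelicot.
Open Scope R_scope.

(* Along the epidemic, u = exp (-(beta/gamma) R) decreases from u0 to u_infinity, and
   S = K u, R = -(gamma/beta) ln u, I = psi u / beta with K = St exp ((beta/gamma) Rt); so
   E = exposed u := N - K u + (gamma/beta) ln u - psi u / beta.  The ODE for psi says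
   exposed' = - delta phi' exposed - K, whose variation-of-constants solution is the
   integral formula: E t = exposed (phi^-1 t).  Everything is then read off in the variable u:
   positivity from the integral formula, E' from the chain rule with (phi^-1)' = - u psi u,
   E(infinity) = 0 because phi^-1 t tends to u_infinity, where N - K u + (gamma/beta) ln u
   vanishes by the choice of alpha and psi tends to 0 (otherwise phi would stay bounded),
   and the maximum is an interior critical point because E'(0+) = beta St It - delta Et > 0. *)

Lemma ex_RInt_continuous_on_ray (f : R -> R) (a u v : R) :
  (forall x, a < x -> continuous f x) -> a < u -> a < v -> ex_RInt f u v.
Proof.
  intros Hf Hu Hv. apply (ex_RInt_continuous (V := R_CompleteNormedModule)).
  intros z [Hz _]. apply Hf.
  apply Rlt_le_trans with (Rmin u v); [apply Rmin_glb_lt|]; assumption.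
Qed.

Lemma is_derive_RInt_lower (f : R -> R) (a b u : R) :
  (forall x, a < x -> continuous f x) -> a < b -> a < u ->
  is_derive (fun v => RInt f v b) u (- f u).
Proof.
  intros Hf Hb Hu.
  apply (is_derive_RInt' f (fun v => RInt f v b) u b); [|now apply Hf].
  apply locally_interval with (Finite a) p_infty; [exact Hu|exact I|].
  intros y Hy _. apply (RInt_correct (V := R_CompleteNormedModule)).
  now apply ex_RInt_continuous_on_ray with a.
Qed.

Lemma div_le_div_of_le (x p z m : R) :
  0 < m -> m <= z -> 0 <= p -> x <= p -> x / z <= p / m.
Proof.
  intros Hm Hmz Hp Hxp. unfold Rdiv. apply Rle_trans with (p * / z).
  - apply Rmult_le_compat_r; [left; apply Rinv_0_lt_compat|]; lra.
  - apply Rmult_le_compat_l; [|apply Rinv_le_contravar]; lra.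
Qed.

Lemma increment_le_of_derive_le (f df : R -> R) (x y L : R) :
  x <= y ->
  (forall z, x <= z <= y -> is_derive f z (df z)) ->
  (forall z, x <= z <= y -> df z <= L) ->
  f y - f x <= L * (y - x).
Proof.
  intros Hxy Hd HL.
  destruct (MVT_gen f x y df) as [z [Hz ->]];
    rewrite ?Rmin_left, ?Rmax_right in * by lra.
  - intros z Hz. apply Hd. lra.
  - intros z Hz. apply derivable_continuous_pt.
    exists (df z). apply is_derive_Reals, Hd. lra.
  - apply Rmult_le_compat_r; [lra|]. now apply HL.
Qed.

Lemma is_derive_interior_max (f : R -> R) (x y c l : R) :
  x < c < y -> (forall z, x < z < y -> f z <= f c) -> is_derive f c l -> l = 0.
Proof.
  intros [Hxc Hcy] Hmax Hd. apply is_derive_Reals in Hd.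
  exact (deriv_maximum f x y c (exist _ l Hd) Hxc Hcy
           (fun z Hxz Hzy => Hmax z (conj Hxz Hzy))).
Qed.

Lemma lt_of_decreasing_lt (f : R -> R) (a x y : R) :
  (forall x y, a < x -> x < y -> f y < f x) -> a < x -> a < y -> f x < f y -> y < x.
Proof.
  intros Hdec Hx Hy Hf. destruct (Rlt_or_le y x) as [Hlt|[Hlt|Heq]]; [exact Hlt| |].
  - pose proof (Hdec x y Hx Hlt). lra.
  - rewrite Heq in Hf. lra.
Qed.

Lemma right_inverse_of_decreasing_continuous (f w : R -> R) (a T : R) :
  (forall x y, a < x -> x < y -> f y < f x) ->
  (forall t, 0 < t -> a < w t /\ f (w t) = t) ->
  0 < T -> continuous w T.
Proof.
  intros Hdec Hw HT.
  assert (Hbelow : forall t x, 0 < t -> a < x -> f x < t -> w t < x).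
  { intros t x Ht Hx Hfx. destruct (Hw t Ht) as [Hwt Hft].
    apply (lt_of_decreasing_lt f a); [exact Hdec|exact Hx|exact Hwt|now rewrite Hft]. }
  assert (Habove : forall t x, 0 < t -> a < x -> t < f x -> x < w t).
  { intros t x Ht Hx Hfx. destruct (Hw t Ht) as [Hwt Hft].
    apply (lt_of_decreasing_lt f a); [exact Hdec|exact Hwt|exact Hx|now rewrite Hft]. }
  destruct (Hw T HT) as [HaT HfT].
  apply filterlim_locally. intros eps.
  set (lo := Rmax (w T - eps) ((a + w T) / 2)).
  set (hi := w T + eps).
  assert (Hlo : a < lo < w T).
  { split; unfold lo.
    - apply Rlt_le_trans with ((a + w T) / 2); [lra|apply Rmax_r].
    - pose proof (cond_pos eps). apply Rmax_lub_lt; lra. }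
  assert (Hhi : w T < hi) by (pose proof (cond_pos eps); unfold hi; lra).
  assert (Hflo : T < f lo) by (rewrite <- HfT at 1; apply Hdec; lra).
  assert (Hfhi : f hi < T) by (rewrite <- HfT; apply Hdec; lra).
  apply locally_interval with (Finite (Rmax 0 (f hi))) (Finite (f lo));
    [apply Rmax_lub_lt; assumption|exact Hflo|].
  intros t Ht1 Ht2. simpl in Ht1, Ht2.
  assert (Ht0 := Rle_lt_trans _ _ _ (Rmax_l 0 (f hi)) Ht1).
  assert (Hthi := Rle_lt_trans _ _ _ (Rmax_r 0 (f hi)) Ht1).
  assert (lo < w t) by (apply Habove; lra).
  assert (w t < hi) by (apply Hbelow; lra).
  assert (w T - eps <= lo) by apply Rmax_l.
  change (Rabs (w t - w T) < eps). apply Rabs_def1; unfold hi in *; lra.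
Qed.

Lemma is_derive_right_inverse (f w : R -> R) (T d : R) :
  continuous w T -> locally T (fun t => f (w t) = t) ->
  is_derive f (w T) d -> d <> 0 -> is_derive w T (/ d).
Proof.
  intros Hw [del1 Hfw] Hf Hd.
  apply is_derive_Reals. apply is_derive_Reals in Hf.
  intros eps Heps.
  destruct (proj1 (filterlim_locally _ _) (continuous_Rinv d Hd) (mkposreal eps Heps))
    as [r Hinv].
  destruct (Hf r (cond_pos r)) as [del2 Hquot].
  destruct (proj1 (filterlim_locally _ _) Hw del2) as [del3 Hcont].
  assert (Hdel : 0 < Rmin del1 del3) by (apply Rmin_glb_lt; apply cond_pos).
  exists (mkposreal _ Hdel). intros h Hh0 Hh. simpl in Hh.
  assert (Hball : forall del : posreal, Rmin del1 del3 <= del -> ball T del (T + h)).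
  { intros del Hle. change (Rabs (T + h - T) < del).
    replace (T + h - T) with h by ring. lra. }
  pose proof (Hfw (T + h) (Hball _ (Rmin_l _ _))) as HfTh.
  pose proof (Hfw T (ball_center T del1)) as HfT.
  pose proof (Hcont (T + h) (Hball _ (Rmin_r _ _))) as Hk.
  change (Rabs (w (T + h) - w T) < del2) in Hk.
  set (k := w (T + h) - w T) in *.
  assert (Hk0 : k <> 0).
  { intro Hk0. replace (w (T + h)) with (w T) in HfTh by (unfold k in Hk0; lra). lra. }
  specialize (Hquot k Hk0 Hk).
  replace (w T + k) with (w (T + h)) in Hquot by (unfold k; ring).
  rewrite HfTh, HfT in Hquot.
  replace (T + h - T) with h in Hquot by ring.
  specialize (Hinv (h / k) Hquot).
  change (Rabs (/ (h / k) - / d) < eps) in Hinv.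
  replace (k / h) with (/ (h / k)) by (field; auto).
  exact Hinv.
Qed.

Section Exposed_in_u.

(* [a] is u_infinity, [b] is u0, [w] is phi^-1, and [EI u] is N - S - R = E + I. *)
Variables beta gamma delta K N a b : R.
Hypothesis beta_pos : 0 < beta.
Hypothesis gamma_pos : 0 < gamma.
Hypothesis delta_pos : 0 < delta.
Hypothesis K_pos : 0 < K.
Hypothesis a_pos : 0 < a.
Hypothesis a_lt_b : a < b.

Variable psi : R -> R.
Hypothesis psi_pos : forall u, a < u <= b -> 0 < psi u.
Hypothesis psi_derivable : forall u, a < u < b -> ex_derive psi u.
Hypothesis psi_left_cont : filterlim psi (at_left b) (locally (psi b)).
Hypothesis psi_ode : forall u, a < u < b ->
  Derive psi u * psi u - (gamma + delta) / u * psi u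
  = - delta * ((beta * N - beta * K * u + gamma * ln u) / u).

Definition EI u := N - K * u + gamma / beta * ln u.
Hypothesis EI_a : EI a = 0.

(* [psi] is only given on (a, b]; continuing it by [psi b] beyond [b] makes every
   integrand below continuous at [b]. *)
Definition psi_ext x := psi (Rmin x b).
Definition exposed u := EI u - psi_ext u / beta.
Definition phi_ext u := RInt (fun x => / (x * psi_ext x)) u b.
Definition phi_exp_integral u := RInt (fun v => exp (delta * phi_ext v)) u b.
Definition E_rate u := K * u * psi_ext u - delta * exposed u.

Hypothesis exposed_b_pos : 0 < exposed b.
Hypothesis E_rate_b_pos : 0 < E_rate b.

Variable w : R -> R.
Hypothesis w_spec : forall t, 0 <= t -> a < w t <= b /\ phi_of psi b (w t) = t.

Lemma psi_ext_eq x : x <= b -> psi_ext x = psi x.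
Proof. intros Hx. unfold psi_ext. now rewrite Rmin_left. Qed.

Lemma psi_ext_pos x : a < x -> 0 < psi_ext x.
Proof.
  intros Hx. apply psi_pos. split; [apply Rmin_glb_lt; lra|apply Rmin_r].
Qed.

Lemma psi_ext_continuous x : a < x -> continuous psi_ext x.
Proof.
  intros Hx. destruct (Rlt_or_le x b) as [Hxb|[Hxb|<-]].
  - apply continuous_ext_loc with psi.
    + apply locally_interval with (Finite a) (Finite b); [exact Hx|exact Hxb|].
      intros y Hy1 Hy2. symmetry. apply psi_ext_eq. simpl in Hy2. lra.
    + apply (ex_derive_continuous (V := R_NormedModule)), psi_derivable. lra.
  - apply continuous_ext_loc with (fun _ => psi b).
    + apply locally_interval with (Finite b) p_infty; [exact Hxb|exact I|].
      intros y Hy _. unfold psi_ext. simpl in Hy. now rewrite Rmin_right by lra.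
    + apply continuous_const.
  - apply filterlim_locally. intros eps.
    destruct (proj1 (filterlim_locally _ _) psi_left_cont eps) as [del Hdel].
    exists del. intros y Hy. unfold psi_ext. rewrite (Rmin_left b b) by lra.
    destruct (Rlt_or_le y b) as [Hyb|Hyb].
    + rewrite Rmin_left by lra. now apply Hdel.
    + rewrite Rmin_right by lra. apply ball_center.
Qed.

Lemma psi_ext_derive x : a < x < b -> is_derive psi_ext x (Derive psi x).
Proof.
  intros Hx. apply is_derive_ext_loc with psi.
  - apply locally_interval with (Finite a) (Finite b); [apply Hx|apply Hx|].
    intros y _ Hy. symmetry. apply psi_ext_eq. simpl in Hy. lra.
  - apply Derive_correct, psi_derivable, Hx.
Qed.

Lemma phi_integrand_continuous x : a < x -> continuous (fun y => / (y * psi_ext y)) x.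
Proof.
  intros Hx. apply continuous_Rinv_comp.
  - apply (continuous_mult (K := R_AbsRing) (fun y => y) psi_ext).
    + apply continuous_id.
    + now apply psi_ext_continuous.
  - pose proof (psi_ext_pos x Hx). apply Rgt_not_eq. change (0 < x * psi_ext x). nra.
Qed.

Lemma phi_ext_derive u : a < u -> is_derive phi_ext u (- / (u * psi_ext u)).
Proof.
  intros Hu. apply (is_derive_RInt_lower (fun x => / (x * psi_ext x)) a); [|lra|lra].
  exact phi_integrand_continuous.
Qed.

Lemma phi_ext_decreasing x y : a < x -> x < y -> phi_ext y < phi_ext x.
Proof.
  intros Hx Hxy. cut (- phi_ext x < - phi_ext y); [lra|].
  apply (incr_function (fun u => - phi_ext u) (Finite a) p_infty
           (fun u => / (u * psi_ext u))); try easy.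
  - intros u Hu _. replace (/ (u * psi_ext u)) with (opp (- / (u * psi_ext u)))
      by (unfold opp; simpl; ring).
    apply (is_derive_opp (V := R_NormedModule) phi_ext), phi_ext_derive, Hu.
  - intros u Hu _. pose proof (psi_ext_pos u Hu). simpl in Hu.
    apply Rinv_0_lt_compat. nra.
Qed.

Lemma phi_ext_b : phi_ext b = 0.
Proof. exact (RInt_point (V := R_CompleteNormedModule) b _). Qed.

Lemma phi_ext_nonneg u : a < u <= b -> 0 <= phi_ext u.
Proof.
  intros [Hu [Hub| ->]]; rewrite <- phi_ext_b; [|apply Rle_refl].
  left. now apply phi_ext_decreasing.
Qed.

Lemma phi_of_eq_phi_ext u : a < u <= b -> phi_of psi b u = phi_ext u.
Proof.
  intros Hu. apply RInt_ext. intros x Hx.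
  rewrite Rmin_left, Rmax_right in Hx by lra. now rewrite psi_ext_eq by lra.
Qed.

Lemma w_range t : 0 <= t -> a < w t <= b /\ phi_ext (w t) = t.
Proof.
  intros Ht. destruct (w_spec t Ht) as [Hw Hphi].
  split; [exact Hw|]. now rewrite <- phi_of_eq_phi_ext.
Qed.

Lemma w_lt t x : 0 <= t -> a < x -> phi_ext x < t -> w t < x.
Proof.
  intros Ht Hx Hphi. destruct (w_range t Ht) as [[Hw _] Hwt].
  apply (lt_of_decreasing_lt phi_ext a); [exact phi_ext_decreasing|exact Hx|exact Hw|].
  now rewrite Hwt.
Qed.

Lemma w_lt_b t : 0 < t -> w t < b.
Proof. intros Ht. apply w_lt; [lra|lra|now rewrite phi_ext_b]. Qed.

Lemma w_phi_ext u : a < u <= b -> w (phi_ext u) = u.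
Proof.
  intros Hu. pose proof (phi_ext_nonneg u Hu) as Ht.
  destruct (w_range _ Ht) as [Hw Hphi].
  destruct (Rtotal_order (w (phi_ext u)) u) as [Hlt|[Heq|Hgt]]; [|exact Heq|].
  - pose proof (phi_ext_decreasing _ _ (proj1 Hw) Hlt). lra.
  - pose proof (phi_ext_decreasing _ _ (proj1 Hu) Hgt). lra.
Qed.

Lemma w_continuous T : 0 < T -> continuous w T.
Proof.
  apply (right_inverse_of_decreasing_continuous phi_ext w a T phi_ext_decreasing).
  intros t Ht. destruct (w_range t (Rlt_le _ _ Ht)) as [[Hw _] Hwt]. now split.
Qed.

Lemma w_derive T : 0 < T -> is_derive w T (- (w T * psi (w T))).
Proof.
  intros HT. destruct (w_range T (Rlt_le _ _ HT)) as [[Hw _] _].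
  pose proof (psi_ext_pos _ Hw) as Hpsi.
  replace (- (w T * psi (w T))) with (/ (- / (w T * psi_ext (w T)))).
  2:{ rewrite psi_ext_eq in * by (left; now apply w_lt_b). field. split; lra. }
  apply is_derive_right_inverse with phi_ext.
  - now apply w_continuous.
  - apply locally_interval with (Finite 0) p_infty; [exact HT|exact I|].
    intros t Ht _. apply w_range. simpl in Ht. lra.
  - now apply phi_ext_derive.
  - apply Ropp_neq_0_compat, Rinv_neq_0_compat. nra.
Qed.

Lemma w_tends_to_a eta : 0 < eta -> exists M, forall t, M < t -> w t < a + eta.
Proof.
  intros Heta. exists (Rmax 0 (phi_ext (a + eta))). intros t Ht.
  pose proof (Rmax_l 0 (phi_ext (a + eta))). pose proof (Rmax_r 0 (phi_ext (a + eta))).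
  apply w_lt; lra.
Qed.

Lemma EI_continuous u : 0 < u -> continuous EI u.
Proof.
  intros Hu. apply (ex_derive_continuous (V := R_NormedModule)).
  unfold EI. auto_derive. exact Hu.
Qed.

Lemma exposed_continuous u : a < u -> continuous exposed u.
Proof.
  intros Hu. apply (continuous_minus (V := R_NormedModule) EI (fun x => psi_ext x / beta)).
  - apply EI_continuous. lra.
  - apply (continuous_mult (K := R_AbsRing) psi_ext (fun _ => / beta)).
    + now apply psi_ext_continuous.
    + apply continuous_const.
Qed.

Lemma Derive_psi_eq u : a < u < b ->
  Derive psi u = ((gamma + delta) * psi u - delta * beta * EI u) / (u * psi u).
Proof.
  intros Hu. pose proof (psi_pos u ltac:(lra)).
  replace (Derive psi u) with ((Derive psi u * psi u - (gamma + delta) / u * psi u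
      + (gamma + delta) / u * psi u) / psi u) by (field; lra).
  rewrite (psi_ode u Hu). unfold EI. field. lra.
Qed.

Lemma exposed_derive u : a < u < b ->
  is_derive exposed u (- E_rate u / (u * psi_ext u)).
Proof.
  intros Hu. pose proof (psi_pos u ltac:(lra)).
  unfold exposed, EI. auto_derive.
  - split; [lra|]. split; [|exact I]. eexists. now apply psi_ext_derive.
  - replace (Derive (fun x => psi_ext x) u) with (Derive psi u)
      by (symmetry; now apply is_derive_unique, psi_ext_derive).
    rewrite Derive_psi_eq by lra. unfold E_rate, exposed, EI. rewrite psi_ext_eq by lra.
    field. lra.
Qed.

Lemma E_rate_continuous u : a < u -> continuous E_rate u.
Proof.
  intros Hu. apply (continuous_minus (V := R_NormedModule)).
  - apply (continuous_mult (K := R_AbsRing)); [|now apply psi_ext_continuous].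
    apply (continuous_mult (K := R_AbsRing)); [apply continuous_const|apply continuous_id].
  - apply (continuous_mult (K := R_AbsRing) (fun _ => delta)); [apply continuous_const|].
    now apply exposed_continuous.
Qed.

Lemma exp_phi_ext_continuous v : a < v -> continuous (fun x => exp (delta * phi_ext x)) v.
Proof.
  intros Hv. apply (ex_derive_continuous (V := R_NormedModule)).
  auto_derive. eexists. now apply phi_ext_derive.
Qed.

Lemma phi_exp_integral_derive u : a < u ->
  is_derive phi_exp_integral u (- exp (delta * phi_ext u)).
Proof.
  intros Hu. apply (is_derive_RInt_lower (fun x => exp (delta * phi_ext x)) a); [|lra|exact Hu].
  exact exp_phi_ext_continuous.
Qed.

Lemma phi_exp_integral_b : phi_exp_integral b = 0.
Proof. exact (RInt_point (V := R_CompleteNormedModule) b _). Qed.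

Lemma phi_exp_integral_nonneg u : a < u <= b -> 0 <= phi_exp_integral u.
Proof.
  intros Hu. apply RInt_ge_0; [apply Hu| |].
  - apply ex_RInt_continuous_on_ray with a; [exact exp_phi_ext_continuous|apply Hu|lra].
  - intros x _. left. apply exp_pos.
Qed.

(* Variation of constants: by [exposed_derive], the right-hand side has derivative
   - K exp (delta phi_ext u), and both sides agree at [b]. *)
Lemma exposed_integral_identity u : a < u <= b ->
  exposed b + K * phi_exp_integral u = exp (delta * phi_ext u) * exposed u.
Proof.
  intros [Hu [Hub| ->]].
  2:{ rewrite phi_ext_b, phi_exp_integral_b, !Rmult_0_r, exp_0. ring. }
  set (D v := exposed b + K * phi_exp_integral v - exp (delta * phi_ext v) * exposed v).
  destruct (MVT_gen D u b (fun _ => 0)) as [v [_ HD]];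
    rewrite ?Rmin_left, ?Rmax_right in * by lra.
  - intros v Hv. assert (Hav : a < v < b) by lra.
    pose proof (phi_ext_derive v (proj1 Hav)) as Hphi.
    pose proof (phi_exp_integral_derive v (proj1 Hav)) as HJ.
    pose proof (exposed_derive v Hav) as HG.
    pose proof (psi_pos v ltac:(lra)).
    unfold D. auto_derive.
    + repeat split; eexists; eassumption.
    + replace (Derive (fun x => phi_exp_integral x) v) with (- exp (delta * phi_ext v))
        by (symmetry; now apply is_derive_unique).
      replace (Derive (fun x => phi_ext x) v) with (- / (v * psi_ext v))
        by (symmetry; now apply is_derive_unique).
      replace (Derive (fun x => exposed x) v) with (- E_rate v / (v * psi_ext v))
        by (symmetry; now apply is_derive_unique).
      unfold E_rate. rewrite psi_ext_eq by lra. field. lra.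
  - intros v Hv. apply continuity_pt_filterlim.
    apply (continuous_minus (V := R_NormedModule)).
    + apply (continuous_plus (V := R_NormedModule)); [apply continuous_const|].
      apply (continuous_mult (K := R_AbsRing) (fun _ => K)); [apply continuous_const|].
      apply (ex_derive_continuous (V := R_NormedModule)).
      eexists. apply phi_exp_integral_derive. lra.
    + apply (continuous_mult (K := R_AbsRing)).
      * apply exp_phi_ext_continuous. lra.
      * apply exposed_continuous. lra.
  - unfold D in HD. rewrite phi_ext_b, phi_exp_integral_b, !Rmult_0_r, exp_0 in HD.
    lra.
Qed.

Lemma exposed_pos u : a < u <= b -> 0 < exposed u.
Proof.
  intros Hu. pose proof (exposed_integral_identity u Hu) as Hid.
  pose proof (phi_exp_integral_nonneg u Hu).
  pose proof (exp_pos (delta * phi_ext u)).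
  assert (0 < exp (delta * phi_ext u) * exposed u) by nra.
  apply (Rmult_lt_reg_l (exp (delta * phi_ext u))); lra.
Qed.

Definition psi_sq_slope z := 2 * ((gamma + delta) * psi z - delta * beta * EI z) / z.

Lemma psi_sq_derive u : a < u < b -> is_derive (fun x => psi x * psi x) u (psi_sq_slope u).
Proof.
  intros Hu. pose proof (psi_pos u ltac:(lra)).
  auto_derive; [split; [|split; [|exact I]]; now apply psi_derivable|].
  change (Derive (fun x => psi x) u) with (Derive psi u).
  rewrite Derive_psi_eq by exact Hu. unfold psi_sq_slope. field. lra.
Qed.

Lemma psi_sq_slope_bounds M z : a < z < b -> Rabs (EI z) <= M ->
  - (2 * delta * beta * M / a) <= psi_sq_slope z
  /\ psi_sq_slope z <= 2 * ((gamma + delta) * psi z + delta * beta * M) / a.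
Proof.
  intros Hz HM. pose proof (psi_pos z ltac:(lra)).
  pose proof (Rle_abs (EI z)). pose proof (Rle_abs (- EI z)). rewrite Rabs_Ropp in *.
  assert (0 <= delta * beta * (M - EI z)) by (apply Rmult_le_pos; nra).
  assert (0 <= delta * beta * (M + EI z)) by (apply Rmult_le_pos; nra).
  unfold psi_sq_slope. split.
  - cut (- (2 * ((gamma + delta) * psi z - delta * beta * EI z)) / z
         <= 2 * delta * beta * M / a).
    { unfold Rdiv. lra. }
    apply div_le_div_of_le; nra.
  - apply div_le_div_of_le; nra.
Qed.

Lemma EI_bounded : exists M, forall u, a <= u <= b -> Rabs (EI u) <= M.
Proof.
  destruct (continuity_ab_maj (fun u => Rabs (EI u)) a b) as [m [Hm _]]; [lra| |].
  - intros u Hu. apply continuity_pt_filterlim.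
    apply continuous_Rabs_comp, EI_continuous. lra.
  - now exists (Rabs (EI m)).
Qed.

Lemma psi_bounded_near_a : exists c B, a < c < b /\ forall u, a < u <= c -> psi u <= B.
Proof.
  destruct EI_bounded as [M HM].
  set (c := (a + b) / 2). set (L := 2 * delta * beta * M / a).
  exists c, (1 + psi c * psi c + L * (c - a)). split; [unfold c; lra|].
  intros u Hu.
  assert (Hinc : - (psi c * psi c) - - (psi u * psi u) <= L * (c - u)).
  { apply (increment_le_of_derive_le (fun x => - (psi x * psi x))
             (fun x => - psi_sq_slope x)); [apply Hu| |].
    - intros z Hz. apply (is_derive_opp (V := R_NormedModule) (fun x => psi x * psi x)).
      apply psi_sq_derive. unfold c in *. lra.
    - intros z Hz. cut (- L <= psi_sq_slope z); [lra|].
      apply (psi_sq_slope_bounds M z); [unfold c in *; lra|apply HM; unfold c in *; lra]. }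
  assert (HM0 : 0 <= M) by (pose proof (Rabs_pos (EI a)); pose proof (HM a ltac:(lra)); lra).
  assert (HL : 0 <= L).
  { unfold L, Rdiv. apply Rmult_le_pos; [|left; apply Rinv_0_lt_compat; lra].
    repeat apply Rmult_le_pos; lra. }
  assert (L * (c - u) <= L * (c - a)) by (apply Rmult_le_compat_l; lra).
  pose proof (Rle_0_sqr (psi u - 1)). unfold Rsqr in *. nra.
Qed.

Lemma psi_sq_increment_le : exists c L, a < c < b /\ 0 < L /\
  forall u v, a < u -> u <= v -> v <= c -> psi v * psi v - psi u * psi u <= L * (v - u).
Proof.
  destruct EI_bounded as [M HM]. destruct psi_bounded_near_a as [c [B [Hc HB]]].
  assert (HM0 : 0 <= M) by (pose proof (Rabs_pos (EI a)); pose proof (HM a ltac:(lra)); lra).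
  assert (HB0 : 0 < B) by (apply Rlt_le_trans with (psi c); [apply psi_pos|apply HB]; lra).
  exists c, (2 * ((gamma + delta) * B + delta * beta * M) / a).
  split; [exact Hc|]. split.
  { assert (0 <= delta * beta * M) by (repeat apply Rmult_le_pos; lra).
    assert (0 < (gamma + delta) * B) by (apply Rmult_lt_0_compat; lra).
    apply Rdiv_lt_0_compat; lra. }
  intros u v Hu Huv Hvc.
  apply (increment_le_of_derive_le (fun x => psi x * psi x) psi_sq_slope); [exact Huv| |].
  - intros z Hz. apply psi_sq_derive. lra.
  - intros z Hz. eapply Rle_trans; [apply (psi_sq_slope_bounds M z)|].
    + lra.
    + apply HM. lra.
    + unfold Rdiv. apply Rmult_le_compat_r; [left; apply Rinv_0_lt_compat; lra|].
      pose proof (HB z ltac:(lra)). nra.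
Qed.

(* If psi stayed above m on (a, v), phi_ext would be bounded on (a, v], whereas w
   reaches every time t. *)
Lemma psi_small_somewhere m v : 0 < m -> a < v <= b -> exists u, a < u < v /\ psi u < m.
Proof.
  intros Hm Hv. apply NNPP. intros Hno.
  assert (Hge : forall u, a < u < v -> m <= psi u).
  { intros u Hu. apply Rnot_lt_le. intros Hlt. apply Hno. now exists u. }
  assert (Ham : 0 < a * m) by nra.
  set (t := phi_ext v + (v - a) / (a * m) + 1).
  assert (0 < (v - a) / (a * m)) by (apply Rdiv_lt_0_compat; lra).
  assert (Ht : 0 <= t) by (pose proof (phi_ext_nonneg v Hv); unfold t; lra).
  destruct (w_range t Ht) as [[Hw _] Hwt].
  assert (Hwv : w t < v) by (apply w_lt; [exact Ht|lra|unfold t; lra]).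
  assert (Hex : forall x y, a < x -> a < y -> ex_RInt (fun z => / (z * psi_ext z)) x y).
  { intros x y Hx Hy. apply ex_RInt_continuous_on_ray with a; [|exact Hx|exact Hy].
    exact phi_integrand_continuous. }
  assert (Hint : RInt (fun x => / (x * psi_ext x)) (w t) v <= (v - w t) / (a * m)).
  { replace ((v - w t) / (a * m)) with (RInt (fun _ => / (a * m)) (w t) v)
      by (rewrite RInt_const; reflexivity).
    apply RInt_le; [lra|apply Hex; lra|apply ex_RInt_const|].
    intros x Hx. rewrite psi_ext_eq by lra.
    apply Rinv_le_contravar; [exact Ham|].
    apply Rmult_le_compat; [lra|lra|lra|apply Hge; lra]. }
  assert (Hsplit : phi_ext (w t) = RInt (fun x => / (x * psi_ext x)) (w t) v + phi_ext v).
  { unfold phi_ext. rewrite <- (RInt_Chasles (V := R_CompleteNormedModule) _ (w t) v b);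
      [reflexivity|apply Hex; lra|apply Hex; lra]. }
  assert ((v - w t) / (a * m) <= (v - a) / (a * m)).
  { unfold Rdiv. apply Rmult_le_compat_r; [left; apply Rinv_0_lt_compat|]; lra. }
  assert (t = phi_ext v + (v - a) / (a * m) + 1) by reflexivity.
  lra.
Qed.

(* psi^2 increases at most linearly near [a], and psi is small at points arbitrarily close
   to [a]. *)
Lemma psi_tends_to_0 eps : 0 < eps ->
  exists eta, 0 < eta /\ forall u, a < u < a + eta -> psi u < eps.
Proof.
  intros Heps. destruct psi_sq_increment_le as [c [L [Hc [HL Hinc]]]].
  exists (Rmin (c - a) (eps * eps / (2 * L))). split.
  { apply Rmin_glb_lt; [lra|]. apply Rdiv_lt_0_compat; nra. }
  intros u Hu.
  pose proof (Rmin_l (c - a) (eps * eps / (2 * L))).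
  pose proof (Rmin_r (c - a) (eps * eps / (2 * L))).
  destruct (psi_small_somewhere (eps / 2) u) as [u' [Hu' Hsmall]]; [lra|lra|].
  pose proof (Hinc u' u (proj1 Hu') (Rlt_le _ _ (proj2 Hu')) ltac:(lra)) as Hle.
  assert (L * (u - u') <= eps * eps / 2).
  { apply Rle_trans with (L * (eps * eps / (2 * L))).
    - apply Rmult_le_compat_l; lra.
    - right. field. lra. }
  pose proof (psi_pos u ltac:(lra)). pose proof (psi_pos u' ltac:(lra)).
  nra.
Qed.

Lemma exposed_tends_to_0 eps : 0 < eps ->
  exists eta, 0 < eta /\ forall u, a < u < a + eta -> Rabs (exposed u) < eps.
Proof.
  intros Heps.
  destruct (proj1 (filterlim_locally _ _) (EI_continuous a a_pos)
              (mkposreal (eps / 2) ltac:(lra))) as [eta1 HEI].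
  destruct (psi_tends_to_0 (beta * eps / 2)) as [eta2 [Heta2 Hpsi]]; [nra|].
  pose proof (cond_pos eta1).
  exists (Rmin (Rmin eta1 eta2) (b - a)).
  split; [repeat apply Rmin_glb_lt; lra|].
  intros u Hu.
  pose proof (Rmin_l (Rmin eta1 eta2) (b - a)). pose proof (Rmin_r (Rmin eta1 eta2) (b - a)).
  pose proof (Rmin_l eta1 eta2). pose proof (Rmin_r eta1 eta2).
  assert (Hball : ball a eta1 u) by (change (Rabs (u - a) < eta1); apply Rabs_def1; lra).
  specialize (HEI u Hball). change (Rabs (EI u - EI a) < eps / 2) in HEI.
  rewrite EI_a, Rminus_0_r in HEI. apply Rabs_def2 in HEI.
  specialize (Hpsi u ltac:(lra)). pose proof (psi_pos u ltac:(lra)).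
  assert (0 < psi u / beta < eps / 2).
  { split; [apply Rdiv_lt_0_compat; lra|].
    apply Rmult_lt_reg_l with beta; [lra|].
    replace (beta * (psi u / beta)) with (psi u) by (field; lra). lra. }
  unfold exposed. rewrite psi_ext_eq by lra. apply Rabs_def1; lra.
Qed.

Lemma exposed_exceeds_initial : exists u1, a < u1 < b /\ exposed b < exposed u1.
Proof.
  destruct (proj1 (filterlim_locally _ _) (E_rate_continuous b a_lt_b)
              (mkposreal _ E_rate_b_pos)) as [rho Hrho].
  pose proof (cond_pos rho).
  set (u1 := Rmax (b - rho / 2) ((a + b) / 2)).
  assert (Hu1 : b - rho / 2 <= u1 /\ a < u1 < b).
  { split; [apply Rmax_l|]. split.
    - apply Rlt_le_trans with ((a + b) / 2); [lra|apply Rmax_r].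
    - apply Rmax_lub_lt; lra. }
  exists u1. split; [apply Hu1|].
  destruct (MVT_gen exposed u1 b (fun x => - E_rate x / (x * psi_ext x)))
    as [x [Hx HMVT]]; rewrite ?Rmin_left, ?Rmax_right in * by lra.
  - intros x Hx. apply exposed_derive. lra.
  - intros x Hx. apply continuity_pt_filterlim, exposed_continuous. lra.
  - assert (Hrate : 0 < E_rate x).
    { assert (Hball : ball b rho x) by (change (Rabs (x - b) < rho); apply Rabs_def1; lra).
      specialize (Hrho x Hball). change (Rabs (E_rate x - E_rate b) < E_rate b) in Hrho.
      apply Rabs_def2 in Hrho. lra. }
    pose proof (psi_ext_pos x ltac:(lra)).
    assert (- E_rate x / (x * psi_ext x) < 0).
    { apply Rmult_neg_pos; [lra|]. apply Rinv_0_lt_compat. nra. }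
    assert (- E_rate x / (x * psi_ext x) * (b - u1) < 0) by (apply Rmult_neg_pos; lra).
    lra.
Qed.

Lemma exposed_max_interior :
  exists u, a < u < b /\ forall v, a < v <= b -> exposed v <= exposed u.
Proof.
  destruct exposed_exceeds_initial as [u1 [Hu1 Hgt]].
  destruct (exposed_tends_to_0 (exposed b) exposed_b_pos) as [eta [Heta Hsmall]].
  set (lo := a + Rmin eta (u1 - a) / 2).
  assert (Hlo : a < lo < u1 /\ lo <= a + eta / 2).
  { pose proof (Rmin_l eta (u1 - a)). pose proof (Rmin_r eta (u1 - a)).
    assert (0 < Rmin eta (u1 - a)) by (apply Rmin_glb_lt; lra).
    unfold lo. lra. }
  destruct (continuity_ab_maj exposed lo b) as [um [Hmax Hum]]; [lra| |].
  { intros x Hx. apply continuity_pt_filterlim, exposed_continuous. lra. }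
  assert (Hu1m : exposed u1 <= exposed um) by (apply Hmax; lra).
  exists um. split.
  - split; [lra|]. destruct (proj2 Hum) as [Hlt|Heq]; [exact Hlt|].
    rewrite Heq in Hu1m. lra.
  - intros v Hv. destruct (Rlt_or_le v lo) as [Hvlo|Hvlo]; [|apply Hmax; lra].
    specialize (Hsmall v ltac:(lra)). apply Rabs_def2 in Hsmall. lra.
Qed.

Lemma E_of_eq_exposed St Et Rt t :
  St * exp (beta / gamma * Rt) = K -> Et = exposed b -> 0 <= t ->
  E_of beta gamma delta St Et Rt b psi w t = exposed (w t).
Proof.
  intros HK HEt Ht. destruct (w_range t Ht) as [Hw Hwt].
  unfold E_of. rewrite HK, HEt.
  replace (RInt (fun v => exp (delta * phi_of psi b v)) (w t) b)
    with (phi_exp_integral (w t)).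
  2:{ apply RInt_ext. intros x Hx. rewrite Rmin_left, Rmax_right in Hx by lra.
      now rewrite phi_of_eq_phi_ext by lra. }
  replace (exposed b * exp (- delta * t) + K * exp (- delta * t) * phi_exp_integral (w t))
    with (exp (- delta * t) * (exposed b + K * phi_exp_integral (w t))) by ring.
  rewrite exposed_integral_identity, Hwt by exact Hw.
  rewrite <- Rmult_assoc, <- exp_plus.
  replace (- delta * t + delta * t) with 0 by ring.
  rewrite exp_0. ring.
Qed.

Lemma exposed_w_derive T : 0 < T -> is_derive (fun t => exposed (w t)) T (E_rate (w T)).
Proof.
  intros HT. destruct (w_range T (Rlt_le _ _ HT)) as [[Hw _] _].
  pose proof (w_lt_b T HT). pose proof (psi_pos (w T) ltac:(lra)).
  replace (E_rate (w T))
    with (scal (- (w T * psi (w T))) (- E_rate (w T) / (w T * psi_ext (w T)))).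
  2:{ unfold scal; simpl; unfold mult; simpl. rewrite psi_ext_eq by lra. field. lra. }
  apply (is_derive_comp (V := R_NormedModule) exposed w);
    [apply exposed_derive; lra|now apply w_derive].
Qed.

Lemma exposed_w_tends_to_0 : is_lim (fun t => exposed (w t)) p_infty 0.
Proof.
  apply is_lim_spec. intros eps.
  destruct (exposed_tends_to_0 eps (cond_pos eps)) as [eta [Heta Hsmall]].
  destruct (w_tends_to_a eta Heta) as [M HM].
  exists (Rmax M 0). intros t Ht.
  pose proof (Rmax_l M 0). pose proof (Rmax_r M 0).
  rewrite Rminus_0_r. apply Hsmall. split.
  - apply w_range. lra.
  - apply HM. lra.
Qed.

Lemma exposed_w_max : exists T1, 0 < T1 /\ E_rate (w T1) = 0
  /\ forall t, 0 <= t -> exposed (w t) <= exposed (w T1).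
Proof.
  destruct exposed_max_interior as [um [Hum Hmax]].
  pose proof (psi_ext_pos um ltac:(lra)).
  assert (Hcrit : - E_rate um / (um * psi_ext um) = 0).
  { apply (is_derive_interior_max exposed a b um); [exact Hum| |apply exposed_derive, Hum].
    intros z Hz. apply Hmax. lra. }
  exists (phi_ext um). rewrite w_phi_ext by lra. split; [|split].
  - rewrite <- phi_ext_b. apply phi_ext_decreasing; lra.
  - replace (E_rate um) with (- (- E_rate um / (um * psi_ext um)) * (um * psi_ext um))
      by (field; lra).
    rewrite Hcrit. ring.
  - intros t Ht. apply Hmax, w_range, Ht.
Qed.

Lemma E_of_properties St Et Rt :
  St * exp (beta / gamma * Rt) = K -> Et = exposed b ->
  let E := E_of beta gamma delta St Et Rt b psi w in
  is_lim E p_infty 0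
  /\ (forall t, 0 <= t -> 0 < E t)
  /\ (forall T, 0 < T ->
        is_derive E T ((delta / beta + K * w T) * psi (w T)
                       - delta * (N - K * w T + gamma / beta * ln (w T))))
  /\ (exists T1, 0 < T1 /\ is_derive E T1 0 /\ forall t, 0 <= t -> E t <= E T1).
Proof.
  intros HK HEt E.
  assert (HE : forall t, 0 <= t -> exposed (w t) = E t)
    by (intros t Ht; symmetry; now apply E_of_eq_exposed).
  assert (HEloc : forall T, 0 < T -> locally T (fun t => exposed (w t) = E t)).
  { intros T HT. apply locally_interval with (Finite 0) p_infty; [exact HT|exact I|].
    intros t Ht _. apply HE. simpl in Ht. lra. }
  split; [|split; [|split]].
  - apply (is_lim_ext_loc (fun t => exposed (w t))); [|exact exposed_w_tends_to_0].
    exists 0. intros t Ht. apply HE. lra.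
  - intros t Ht. rewrite <- HE by exact Ht. apply exposed_pos, w_range, Ht.
  - intros T HT. apply (is_derive_ext_loc _ _ _ _ (HEloc T HT)).
    replace ((delta / beta + K * w T) * psi (w T)
             - delta * (N - K * w T + gamma / beta * ln (w T)))
      with (E_rate (w T)).
    + now apply exposed_w_derive.
    + unfold E_rate, exposed, EI. rewrite psi_ext_eq by (left; now apply w_lt_b).
      field. lra.
  - destruct exposed_w_max as [T1 [HT1 [Hcrit Hmax]]].
    exists T1. split; [exact HT1|]. split.
    + apply (is_derive_ext_loc _ _ _ _ (HEloc _ HT1)). rewrite <- Hcrit.
      now apply exposed_w_derive.
    + intros t Ht. rewrite <- !HE by lra. now apply Hmax.
Qed.

End Exposed_in_u.

Lemma Rmult_exp_cancel (x c r : R) : x * exp (c * r) * exp (- c * r) = x.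
Proof.
  rewrite Rmult_assoc, <- exp_plus.
  replace (c * r + - c * r) with 0 by ring.
  rewrite exp_0. ring.
Qed.

Lemma EI_at_u_infinity beta gamma K N alpha : 0 < beta -> 0 < gamma ->
  alpha = N - K * exp (- (beta / gamma) * alpha) ->
  EI beta gamma K N (exp (- (beta / gamma) * alpha)) = 0.
Proof.
  intros Hbeta Hgamma Halpha. unfold EI. rewrite ln_exp.
  replace (gamma / beta * (- (beta / gamma) * alpha)) with (- alpha) by (field; lra).
  lra.
Qed.

Lemma exposed_at_u0 beta gamma St Et It Rt psi : 0 < beta -> 0 < gamma ->
  psi (exp (- (beta / gamma) * Rt)) = beta * It ->
  exposed beta gamma (St * exp (beta / gamma * Rt)) (St + Et + It + Rt)
    (exp (- (beta / gamma) * Rt)) psi (exp (- (beta / gamma) * Rt)) = Et.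
Proof.
  intros Hbeta Hgamma Hpsi. unfold exposed, EI, psi_ext.
  rewrite Rmin_left, Hpsi, Rmult_exp_cancel, ln_exp by lra.
  field. lra.
Qed.

Theorem theorem9
  (beta gamma delta St Et It Rt : R)
  (Hbeta : 0 < beta) (Hgamma : 0 < gamma) (Hdelta : 0 < delta)
  (HN : 0 < St + Et + It + Rt)
  (A1 : 0 < It)
  (A2 : Et > gamma / delta * It)
  (A3 : St > delta * Et / (beta * It))
  (A4 : 0 <= Rt /\ St + Et + It + Rt > St * exp (beta / gamma * Rt) + Rt)
  (alpha : R)
  (Halpha : Rt < alpha < St + Et + It + Rt /\
     alpha = St + Et + It + Rt
             - St * exp (beta / gamma * Rt) * exp (- (beta / gamma) * alpha))
  (A5 : St < gamma / beta * exp (beta / gamma * (alpha - Rt)))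
  (psi : R -> R)
  (Hpsi_pos : forall u, exp (- (beta / gamma) * alpha) < u
                        <= exp (- (beta / gamma) * Rt) -> 0 < psi u)
  (Hpsi_cont : forall u, exp (- (beta / gamma) * alpha) < u
                         < exp (- (beta / gamma) * Rt) -> continuous psi u)
  (Hpsi_cont_u0 : filterlim psi (at_left (exp (- (beta / gamma) * Rt)))
                    (locally (psi (exp (- (beta / gamma) * Rt)))))
  (Hpsi_C1 : forall u, exp (- (beta / gamma) * alpha) < u
                       < exp (- (beta / gamma) * Rt) ->
     ex_derive psi u /\ continuous (Derive psi) u)
  (Hpsi_ode : forall u, exp (- (beta / gamma) * alpha) < u
                        < exp (- (beta / gamma) * Rt) ->
     Derive psi u * psi u - (gamma + delta) / u * psi u
     = - delta * ((beta * (St + Et + It + Rt)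
                   - beta * St * exp (beta / gamma * Rt) * u
                   + gamma * ln u) / u))
  (Hpsi_u0 : psi (exp (- (beta / gamma) * Rt)) = beta * It)
  (phiinv : R -> R)
  (Hphiinv : forall t, 0 <= t ->
     exp (- (beta / gamma) * alpha) < phiinv t <= exp (- (beta / gamma) * Rt)
     /\ phi_of psi (exp (- (beta / gamma) * Rt)) (phiinv t) = t) :
  let u0 := exp (- (beta / gamma) * Rt) in
  let N := St + Et + It + Rt in
  let E := E_of beta gamma delta St Et Rt u0 psi phiinv in
  is_lim E p_infty 0
  /\ (forall t, 0 <= t -> 0 < E t)
  /\ (forall T, 0 < T ->
        is_derive E T
          ((delta / beta + St * exp (beta / gamma * Rt) * phiinv T)
             * psi (phiinv T)
           - delta * (N - St * exp (beta / gamma * Rt) * phiinv T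
                      + gamma / beta * ln (phiinv T))))
  /\ (exists T1, 0 < T1 /\ is_derive E T1 0 /\
        forall t, 0 <= t -> E t <= E T1).
Proof.
  cbv zeta. destruct Halpha as [[HRt_alpha _] Halpha].
  assert (HEt : 0 < Et).
  { assert (0 < gamma / delta * It) by (apply Rmult_lt_0_compat; [apply Rdiv_lt_0_compat|]; lra).
    lra. }
  assert (HSt_It : delta * Et < St * (beta * It)).
  { apply (Rmult_lt_compat_r (beta * It)) in A3; [|nra].
    unfold Rdiv in A3. rewrite Rmult_assoc, Rinv_l in A3 by nra. lra. }
  assert (HSt : 0 < St).
  { assert (0 < delta * Et / (beta * It)) by (apply Rdiv_lt_0_compat; nra). lra. }
  pose proof (exposed_at_u0 beta gamma St Et It Rt psi Hbeta Hgamma Hpsi_u0) as Hexposed.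
  apply (E_of_properties beta gamma delta (St * exp (beta / gamma * Rt)) (St + Et + It + Rt)
           (exp (- (beta / gamma) * alpha)) (exp (- (beta / gamma) * Rt)));
    try assumption.
  - pose proof (exp_pos (beta / gamma * Rt)). nra.
  - apply exp_pos.
  - apply exp_increasing. assert (0 < beta / gamma) by (apply Rdiv_lt_0_compat; lra). nra.
  - intros u Hu. apply Hpsi_C1, Hu.
  - intros u Hu. rewrite (Hpsi_ode u Hu), (Rmult_assoc beta St). reflexivity.
  - now apply EI_at_u_infinity.
  - now rewrite Hexposed.
  - unfold E_rate, psi_ext. rewrite Rmin_left, Hexposed, Rmult_exp_cancel, Hpsi_u0 by lra.
    lra.
  - reflexivity.
  - now symmetry.
Qed.
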